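(* Let $d,m\ge 1$ and, for each $u\in\mathbb{R}$ and $\mu\in\{1,\ldots,m\}$, let $M_\mu^u\in\mathbb{C}^{d\times d}$ be matrices with $\sum_{\mu=1}^m (M_\mu^u)^\dagger M_\mu^u=\mathrm{I}$ for every $u$, such that each $u\mapsto M_\mu^u$ is of class $C^2$, and such that for $u=0$ all $M_\mu^0$ are diagonal in a common orthonormal basis $\{|n\rangle : n=1,\ldots,d\}$ of $\mathbb{C}^d$: $M_\mu^0=\sum_{n=1}^d c_{\mu,n}|n\rangle\langle n|$ with $c_{\mu,n}\in\mathbb{C}$. Define the $d\times d$ real matrix $R$ by $$R_{n_1,n_2}=\sum_{\mu=1}^m\Big(2\Big|\langle n_1|\tfrac{d (M_\mu^u)^\dagger}{du}\big|_{u=0}|n_2\rangle\Big|^2+2\delta_{n_1,n_2}\,\mathrm{Re}\Big(c_{\mu,n_1}\langle n_1|\tfrac{d^2 (M_\mu^u)^\dagger}{du^2}\big|_{u=0}|n_2\rangle\Big)\Big).$$ If $R\neq 0$, then $P=\mathrm{I}-R/\mathrm{tr}(R)$ is well defined, has non-negative entries, and is a right stochastic matrix (each row sums to $1$).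
   Context: $\mathrm{I}$ denotes the identity matrix, $\dagger$ the conjugate transpose, $\delta$ the Kronecker delta. *)

From mathcomp Require Import all_boot all_order all_algebra.
From mathcomp Require Import all_classical all_reals all_analysis.
From mathcomp.real_closed Require Import complex.

Set Implicit Arguments.
Unset Strict Implicit.
Unset Printing Implicit Defensive.

Import Order.TTheory GRing.Theory Num.Theory.
Import numFieldNormedType.Exports.
Local Open Scope ring_scope.

Definition cdag (R : rcfType) (p q : nat) (A : 'M[R[i]]_(p, q)) : 'M[R[i]]_(q, p) :=
  (map_mx (@conjc R) A)^T.

Definition cderiv (R : realType) (f : R -> R[i]) (u : R) : R[i] :=
  Complex (derive1 (fun v => complex.Re (f v)) u) (derive1 (fun v => complex.Im (f v)) u).

Definition mxderiv (R : realType) (p q : nat) (F : R -> 'M[R[i]]_(p, q)) (u : R)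
  : 'M[R[i]]_(p, q) := \matrix_(i, j) cderiv (fun v => F v i j) u.

Definition C2_real (R : realType) (g : R -> R) : Prop :=
  (forall x, derivable g x 1) /\ (forall x, derivable (derive1 g) x 1) /\
  (forall x : R, continuous_at x (derive1 (derive1 g))).

Definition C2_complex (R : realType) (f : R -> R[i]) : Prop :=
  C2_real (fun v => complex.Re (f v)) /\ C2_real (fun v => complex.Im (f v)).

Definition C2_mx (R : realType) (p q : nat) (F : R -> 'M[R[i]]_(p, q)) : Prop :=
  forall i j, C2_complex (fun v => F v i j).

Definition cabs2 (R : rcfType) (z : R[i]) : R := complex.Re z ^+ 2 + complex.Im z ^+ 2.

(* <n1| A |n2> where |n> is the n-th column of U *)
Definition braket (R : rcfType) (d : nat) (U A : 'M[R[i]]_d) (n1 n2 : 'I_d) : R[i] :=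
  (cdag (col n1 U) *m A *m col n2 U) 0 0.

Definition Rmat (R : realType) (d m : nat) (M : 'I_m -> R -> 'M[R[i]]_d)
  (U : 'M[R[i]]_d) (c : 'I_m -> 'I_d -> R[i]) : 'M[R]_d :=
  \matrix_(n1, n2) \sum_(mu < m)
     (2 * cabs2 (braket U (mxderiv (fun u => cdag (M mu u)) 0) n1 n2)
      + 2 * (n1 == n2)%:R *
        complex.Re (c mu n1 * braket U (mxderiv (mxderiv (fun u => cdag (M mu u))) 0) n1 n2)).

From mathcomp Require Import all_boot all_order all_algebra.
From mathcomp Require Import all_classical all_reals all_analysis.
From mathcomp.real_closed Require Import complex.
From mathcomp Require Import ring lra.

Set Implicit Arguments.
Unset Strict Implicit.
Unset Printing Implicit Defensive.
Import Order.TTheory GRing.Theory Num.Theory.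
Import numFieldNormedType.Exports.
Local Open Scope ring_scope.

(* Put A_mu(u) = (M_mu^u)^dagger, so that sum_mu A_mu A_mu^dagger = I for every u.
   Differentiating this twice at u = 0 and taking the real part of its <n|.|n> entry
   shows that every row of R sums to zero: since A_mu(0)^dagger = M_mu^0 is diagonal in
   the basis, <n| A_mu'' A_mu(0)^dagger |n> = c_{mu,n} <n| A_mu'' |n>, while the middle
   term of the Leibniz rule gives 2 sum_n' |<n| A_mu' |n'>|^2.  The off-diagonal entries
   of R are sums of squared moduli, so R is a generator matrix: nonnegative off the
   diagonal with zero row sums.  A nonzero generator matrix has a nonpositive diagonal
   and a negative trace, hence I - R / tr R is stochastic. *)

Section Derive1.
Variable R : numFieldType.
Implicit Types f g : R -> R.

(* Pointwise forms of the library rules, which are stated for [f + g], [f * g], ...: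
   unifying those patterns with lambda terms is very slow. *)
Lemma derivable1D f g x : derivable f x 1 -> derivable g x 1 ->
  derivable (fun v => f v + g v) x 1.
Proof. by move=> df dg; exact: derivableD df dg. Qed.

Lemma derivable1B f g x : derivable f x 1 -> derivable g x 1 ->
  derivable (fun v => f v - g v) x 1.
Proof. by move=> df dg; exact: derivableB df dg. Qed.

Lemma derivable1M f g x : derivable f x 1 -> derivable g x 1 ->
  derivable (fun v => f v * g v) x 1.
Proof. by move=> df dg; exact: derivableM df dg. Qed.

Lemma derivable1N f x : derivable f x 1 -> derivable (fun v => - f v) x 1.
Proof. by move=> df; exact: derivableN df. Qed.

Lemma derive1D f g x : derivable f x 1 -> derivable g x 1 ->
  derive1 (fun v => f v + g v) x = derive1 f x + derive1 g x.
Proof. by move=> df dg; rewrite !derive1E; exact: deriveD. Qed.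

Lemma derive1B f g x : derivable f x 1 -> derivable g x 1 ->
  derive1 (fun v => f v - g v) x = derive1 f x - derive1 g x.
Proof. by move=> df dg; rewrite !derive1E; exact: deriveB. Qed.

Lemma derive1M f g x : derivable f x 1 -> derivable g x 1 ->
  derive1 (fun v => f v * g v) x = f x * derive1 g x + g x * derive1 f x.
Proof. by move=> df dg; rewrite !derive1E; exact: deriveM. Qed.

End Derive1.

Section ComplexDerivative.
Variable R : realType.
Implicit Types f g : R -> R[i].

Definition cderivable f x :=
  derivable (fun v => complex.Re (f v)) x 1 /\ derivable (fun v => complex.Im (f v)) x 1.

Lemma ReD_fun f g :
  (fun v => complex.Re (f v + g v)) = (fun v => complex.Re (f v) + complex.Re (g v)).
Proof. by apply/funext => v; rewrite raddfD. Qed.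

Lemma ImD_fun f g :
  (fun v => complex.Im (f v + g v)) = (fun v => complex.Im (f v) + complex.Im (g v)).
Proof. by apply/funext => v; rewrite raddfD. Qed.

Lemma ReM_fun f g : (fun v => complex.Re (f v * g v)) =
  (fun v => complex.Re (f v) * complex.Re (g v) - complex.Im (f v) * complex.Im (g v)).
Proof. by apply/funext => v; case: (f v) (g v) => a b []. Qed.

Lemma ImM_fun f g : (fun v => complex.Im (f v * g v)) =
  (fun v => complex.Re (f v) * complex.Im (g v) + complex.Im (f v) * complex.Re (g v)).
Proof. by apply/funext => v; case: (f v) (g v) => a b []. Qed.

Lemma ReJ_fun f : (fun v => complex.Re (f v)^*%C) = (fun v => complex.Re (f v)).
Proof. by apply/funext => v; case: (f v). Qed.

Lemma ImJ_fun f : (fun v => complex.Im (f v)^*%C) = (fun v => - complex.Im (f v)).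
Proof. by apply/funext => v; case: (f v). Qed.

Lemma cderiv_cst (k : R[i]) : cderiv (fun _ : R => k) = fun _ => 0.
Proof. by apply/funext => x; rewrite /cderiv !derive1_cst. Qed.

Lemma cderivableD f g x :
  cderivable f x -> cderivable g x -> cderivable (fun v => f v + g v) x.
Proof.
move=> [f1 f2] [g1 g2]; rewrite /cderivable ReD_fun ImD_fun.
by split; [exact: derivable1D f1 g1 | exact: derivable1D f2 g2].
Qed.

Lemma cderivD f g x : cderivable f x -> cderivable g x ->
  cderiv (fun v => f v + g v) x = cderiv f x + cderiv g x.
Proof.
by move=> [f1 f2] [g1 g2]; rewrite /cderiv ReD_fun ImD_fun (derive1D f1 g1) (derive1D f2 g2).
Qed.

Lemma cderivableM f g x :
  cderivable f x -> cderivable g x -> cderivable (fun v => f v * g v) x.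
Proof.
move=> [f1 f2] [g1 g2]; rewrite /cderivable ReM_fun ImM_fun.
split; first exact: derivable1B (derivable1M f1 g1) (derivable1M f2 g2).
exact: derivable1D (derivable1M f1 g2) (derivable1M f2 g1).
Qed.

Lemma cderivM f g x : cderivable f x -> cderivable g x ->
  cderiv (fun v => f v * g v) x = cderiv f x * g x + f x * cderiv g x.
Proof.
move=> [f1 f2] [g1 g2]; rewrite /cderiv ReM_fun ImM_fun.
rewrite (derive1B (derivable1M f1 g1) (derivable1M f2 g2)).
rewrite (derive1D (derivable1M f1 g2) (derivable1M f2 g1)).
rewrite (derive1M f1 g1) (derive1M f2 g2) (derive1M f1 g2) (derive1M f2 g1).
case: (f x) (g x) => a b [c e] /=; congr Complex; ring.
Qed.

Lemma cderivableJ f x : cderivable f x -> cderivable (fun v => (f v)^*%C) x.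
Proof.
by move=> [f1 f2]; rewrite /cderivable ReJ_fun ImJ_fun; split; last exact: derivable1N.
Qed.

Lemma cderivJ f x : cderivable f x -> cderiv (fun v => (f v)^*%C) x = (cderiv f x)^*%C.
Proof. by move=> [_ f2]; rewrite /cderiv ReJ_fun ImJ_fun (derive1N f2). Qed.

Lemma cderivable_sum (I : Type) (r : seq I) (F : I -> R -> R[i]) x :
  (forall i, cderivable (F i) x) -> cderivable (fun v => \sum_(i <- r) F i v) x.
Proof.
move=> dF; elim: r => [|a r IH].
  have -> : (fun v => \sum_(i <- [::]) F i v) = fun _ => 0.
    by apply/funext => v; rewrite big_nil.
  by split; exact: derivable_cst.
have -> : (fun v => \sum_(i <- a :: r) F i v) = fun v => F a v + \sum_(i <- r) F i v.
  by apply/funext => v; rewrite big_cons.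
exact: cderivableD.
Qed.

Lemma cderiv_sum (I : Type) (r : seq I) (F : I -> R -> R[i]) x :
  (forall i, cderivable (F i) x) ->
  cderiv (fun v => \sum_(i <- r) F i v) x = \sum_(i <- r) cderiv (F i) x.
Proof.
move=> dF; elim: r => [|a r IH].
  have -> : (fun v => \sum_(i <- [::]) F i v) = fun _ => 0.
    by apply/funext => v; rewrite big_nil.
  by rewrite big_nil cderiv_cst.
have -> : (fun v => \sum_(i <- a :: r) F i v) = fun v => F a v + \sum_(i <- r) F i v.
  by apply/funext => v; rewrite big_cons.
by rewrite big_cons cderivD ?IH //; exact: cderivable_sum.
Qed.

End ComplexDerivative.

Section SecondDerivative.
Variable R : realType.
Implicit Types f g : R -> R[i].

Definition twice_cderivable f := forall x, cderivable f x /\ cderivable (cderiv f) x.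

Lemma C2_complex_twice_cderivable f : C2_complex f -> twice_cderivable f.
Proof. by move=> [[re1 [re2 _]] [im1 [im2 _]]] x. Qed.

Lemma cderivM_fun f g : (forall x, cderivable f x) -> (forall x, cderivable g x) ->
  cderiv (fun v => f v * g v) = fun v => cderiv f v * g v + f v * cderiv g v.
Proof. by move=> df dg; apply/funext => v; rewrite cderivM. Qed.

Lemma twice_cderivableM f g :
  twice_cderivable f -> twice_cderivable g -> twice_cderivable (fun v => f v * g v).
Proof.
move=> f2 g2 x; rewrite cderivM_fun => [|v|v]; [|exact: (f2 v).1|exact: (g2 v).1].
split; first exact: cderivableM (f2 x).1 (g2 x).1.
exact: cderivableD (cderivableM (f2 x).2 (g2 x).1) (cderivableM (f2 x).1 (g2 x).2).
Qed.

Lemma cderiv2M f g x : twice_cderivable f -> twice_cderivable g ->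
  cderiv (cderiv (fun v => f v * g v)) x =
  cderiv (cderiv f) x * g x + 2 * (cderiv f x * cderiv g x) + f x * cderiv (cderiv g) x.
Proof.
move=> f2 g2; rewrite cderivM_fun => [|v|v]; [|exact: (f2 v).1|exact: (g2 v).1].
rewrite cderivD; last 2 first.
- exact: cderivableM (f2 x).2 (g2 x).1.
- exact: cderivableM (f2 x).1 (g2 x).2.
rewrite (cderivM (f2 x).2 (g2 x).1) (cderivM (f2 x).1 (g2 x).2).
by rewrite mulr_natl mulr2n !addrA.
Qed.

Lemma cderivJ_fun f : (forall x, cderivable f x) ->
  cderiv (fun v => (f v)^*%C) = fun v => (cderiv f v)^*%C.
Proof. by move=> df; apply/funext => v; rewrite cderivJ. Qed.

Lemma twice_cderivableJ f : twice_cderivable f -> twice_cderivable (fun v => (f v)^*%C).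
Proof.
move=> f2 x; rewrite cderivJ_fun => [|v]; last exact: (f2 v).1.
by split; apply: cderivableJ; [exact: (f2 x).1 | exact: (f2 x).2].
Qed.

Lemma cderiv2J f x : twice_cderivable f ->
  cderiv (cderiv (fun v => (f v)^*%C)) x = (cderiv (cderiv f) x)^*%C.
Proof.
move=> f2; rewrite cderivJ_fun => [|v]; last exact: (f2 v).1.
exact: cderivJ (f2 x).2.
Qed.

Lemma cderiv_sum_fun (I : Type) (r : seq I) (F : I -> R -> R[i]) :
  (forall i x, cderivable (F i) x) ->
  cderiv (fun v => \sum_(i <- r) F i v) = fun v => \sum_(i <- r) cderiv (F i) v.
Proof. by move=> dF; apply/funext => v; rewrite cderiv_sum. Qed.

Lemma twice_cderivable_sum (I : Type) (r : seq I) (F : I -> R -> R[i]) :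
  (forall i, twice_cderivable (F i)) -> twice_cderivable (fun v => \sum_(i <- r) F i v).
Proof.
move=> F2 x; rewrite cderiv_sum_fun => [|i v]; last exact: (F2 i v).1.
by split; apply: cderivable_sum => i; [exact: (F2 i x).1 | exact: (F2 i x).2].
Qed.

Lemma cderiv2_sum (I : Type) (r : seq I) (F : I -> R -> R[i]) x :
  (forall i, twice_cderivable (F i)) ->
  cderiv (cderiv (fun v => \sum_(i <- r) F i v)) x = \sum_(i <- r) cderiv (cderiv (F i)) x.
Proof.
move=> F2; rewrite cderiv_sum_fun => [|i v]; last exact: (F2 i v).1.
by apply: cderiv_sum => i; exact: (F2 i x).2.
Qed.

End SecondDerivative.

Section Dagger.
Variable R : rcfType.

Lemma cdagE (p q : nat) (A : 'M[R[i]]_(p, q)) a b : cdag A a b = (A b a)^*%C.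
Proof. by rewrite !mxE. Qed.

Lemma cdagK (p q : nat) (A : 'M[R[i]]_(p, q)) : cdag (cdag A) = A.
Proof. by apply/matrixP => a b; rewrite !mxE conjcK. Qed.

Lemma cdagM (p q r : nat) (A : 'M[R[i]]_(p, q)) (B : 'M[R[i]]_(q, r)) :
  cdag (A *m B) = cdag B *m cdag A.
Proof. by rewrite /cdag map_mxM trmx_mul. Qed.

End Dagger.

Lemma mxderiv2E (R : realType) (p q : nat) (F : R -> 'M[R[i]]_(p, q)) x a b :
  mxderiv (mxderiv F) x a b = cderiv (cderiv (fun v => F v a b)) x.
Proof. by rewrite mxE; congr cderiv; apply/funext => v; rewrite mxE. Qed.

Lemma deriv2_sum_mul_cdag_eq0 (R : realType) (m p q : nat)
    (A : 'I_m -> R -> 'M[R[i]]_(p, q)) (C : 'M[R[i]]_p) x :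
  (forall mu j k, twice_cderivable (fun v => A mu v j k)) ->
  (forall v, \sum_(mu < m) A mu v *m cdag (A mu v) = C) ->
  \sum_(mu < m) (mxderiv (mxderiv (A mu)) x *m cdag (A mu x)
     + 2%:R *: (mxderiv (A mu) x *m cdag (mxderiv (A mu) x))
     + A mu x *m cdag (mxderiv (mxderiv (A mu)) x)) = 0.
Proof.
move=> A2 AAC; apply/matrixP => j l.
pose a mu k v := A mu v j k; pose b mu k v := A mu v l k.
pose F mu k v := a mu k v * (b mu k v)^*%C.
have F2 mu k : twice_cderivable (F mu k).
  exact: twice_cderivableM (A2 mu j k) (twice_cderivableJ (A2 mu l k)).
have F2E mu k : cderiv (cderiv (F mu k)) x =
    cderiv (cderiv (a mu k)) x * (b mu k x)^*%C
    + 2 * (cderiv (a mu k) x * (cderiv (b mu k) x)^*%C)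
    + a mu k x * (cderiv (cderiv (b mu k)) x)^*%C.
  rewrite (cderiv2M x (A2 mu j k) (twice_cderivableJ (A2 mu l k))).
  by rewrite (cderiv2J x (A2 mu l k)) (cderivJ (A2 mu l k x).1).
have entry_const : (fun v => \sum_(mu < m) \sum_(k < q) F mu k v) = fun _ => C j l.
  apply/funext => v; rewrite -(AAC v) summxE; apply: eq_bigr => mu _.
  by rewrite mxE; apply: eq_bigr => k _; rewrite /F !mxE.
have := cderiv2_sum (index_enum 'I_m) x
  (fun mu => twice_cderivable_sum (index_enum 'I_q) (F2 mu)).
rewrite entry_const !cderiv_cst => /esym sum_eq0.
rewrite summxE [RHS]mxE -[RHS]sum_eq0; apply: eq_bigr => mu _.
rewrite (cderiv2_sum _ _ (F2 mu)) !mxE mulr_sumr -!big_split; apply: eq_bigr => k _ /=.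
by rewrite F2E !cdagE !mxderiv2E !mxE.
Qed.

Section Braket.
Variables (R : rcfType) (d : nat) (U : 'M[R[i]]_d).
Hypothesis U_unitary : cdag U *m U = 1%:M.

Lemma cdag_col_mul_col a b : cdag (col a U) *m col b U = (a == b)%:R%:M.
Proof.
apply/matrixP => i j; rewrite (ord1 i) (ord1 j).
have := congr1 (fun A : 'M[R[i]]_d => A a b) U_unitary; rewrite !mxE => <-.
by apply: eq_bigr => k _; rewrite !mxE.
Qed.

Lemma sum_col_mul_cdag_col : \sum_(n < d) col n U *m cdag (col n U) = 1%:M.
Proof.
apply/matrixP => a b; rewrite summxE -(mulmx1C U_unitary) mxE.
by apply: eq_bigr => k _; rewrite !mxE big_ord1 !mxE.
Qed.

Lemma braketD A B a b : braket U (A + B) a b = braket U A a b + braket U B a b.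
Proof. by rewrite /braket mulmxDr mulmxDl mxE. Qed.

Lemma braketZ k A a b : braket U (k *: A) a b = k * braket U A a b.
Proof. by rewrite /braket -scalemxAr -scalemxAl mxE. Qed.

Lemma braket_sum (I : Type) (r : seq I) (A : I -> 'M[R[i]]_d) a b :
  braket U (\sum_(i <- r) A i) a b = \sum_(i <- r) braket U (A i) a b.
Proof. by rewrite /braket mulmx_sumr mulmx_suml summxE. Qed.

Lemma braket0 a b : braket U 0 a b = 0.
Proof. by rewrite /braket mulmx0 mul0mx mxE. Qed.

Lemma braket_cdag A a b : braket U (cdag A) a b = (braket U A b a)^*%C.
Proof. by rewrite /braket -cdagE !cdagM cdagK mulmxA. Qed.

Lemma braket_mul_diag A (c : 'I_d -> R[i]) a :
  braket U (A *m \sum_(n < d) c n *: (col n U *m cdag (col n U))) a a =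
  c a * braket U A a a.
Proof.
have diag_col : \sum_(n < d) c n *: (col n U *m cdag (col n U)) *m col a U = c a *: col a U.
  rewrite (bigD1 a) //= big1 => [|n /negbTE an].
    by rewrite -scalemxAl -mulmxA cdag_col_mul_col eqxx mulmx1 addr0.
  by rewrite -scalemxAl -mulmxA cdag_col_mul_col an mul_mx_scalar scale0r scaler0.
by rewrite /braket -!mulmxA mulmx_suml diag_col -!scalemxAr mxE mulmxA.
Qed.

Lemma braket_mul_cdag A a :
  braket U (A *m cdag A) a a = \sum_(n < d) braket U A a n * (braket U A a n)^*%C.
Proof.
rewrite -[A in A *m _]mulmx1 -sum_col_mul_cdag_col mulmx_sumr mulmx_suml braket_sum.
apply: eq_bigr => n _; rewrite -braket_cdag /braket.
have -> : cdag (col a U) *m (A *m (col n U *m cdag (col n U)) *m cdag A) *m col a U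
    = (cdag (col a U) *m A *m col n U) *m (cdag (col n U) *m cdag A *m col a U).
  by rewrite !mulmxA.
by rewrite mxE big_ord1.
Qed.

End Braket.

Section GeneratorMatrix.
Variables (R : realFieldType) (d : nat) (Q : 'M[R]_d).
Hypotheses (Q_offdiag_ge0 : forall i j, i != j -> 0 <= Q i j)
  (Q_row_sum : forall i, \sum_(j < d) Q i j = 0).

Lemma generator_diagE i : Q i i = - \sum_(j | j != i) Q i j.
Proof. by have /eqP := Q_row_sum i; rewrite (bigD1 i) //= addr_eq0 => /eqP. Qed.

Lemma generator_diag_le0 i : Q i i <= 0.
Proof.
rewrite generator_diagE oppr_le0 sumr_ge0 // => j ji.
by apply: Q_offdiag_ge0; rewrite eq_sym.
Qed.

Lemma generator_trace_lt0 : Q != 0 -> \tr Q < 0.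
Proof.
move=> Q_neq0; rewrite lt_neqAle sumr_le0 ?andbT => [|i _]; last exact: generator_diag_le0.
apply: contra Q_neq0 => /eqP trQ0; apply/eqP/matrixP => i j; rewrite mxE.
have diag0 k : Q k k = 0.
  apply/eqP; rewrite -oppr_eq0; apply/eqP.
  apply: (@psumr_eq0P _ _ xpredT (fun k => - Q k k)) => // [l _|].
    by rewrite oppr_ge0 generator_diag_le0.
  by rewrite sumrN -/(\tr Q) trQ0 oppr0.
have [<-|ij] := eqVneq i j; first exact: diag0.
have /eqP := diag0 i; rewrite generator_diagE oppr_eq0 => /eqP offdiag_sum0.
apply: (psumr_eq0P _ offdiag_sum0); last by rewrite eq_sym.
by move=> k ki; apply: Q_offdiag_ge0; rewrite eq_sym.
Qed.

Lemma generator_stochastic_ge0 i j : Q != 0 -> 0 <= (1%:M - (\tr Q)^-1 *: Q) i j.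
Proof.
move=> /generator_trace_lt0 trQ_lt0; rewrite !mxE.
have [<-|ij] := eqVneq i j; last first.
  rewrite mulr0n sub0r oppr_ge0 mulr_le0_ge0 ?Q_offdiag_ge0 //.
  by rewrite invr_le0 ltW.
have trQ_le_diag : \tr Q <= Q i i.
  rewrite /mxtrace (bigD1 i) //= gerDl sumr_le0 // => k _; exact: generator_diag_le0.
have trQ_neq0 : \tr Q != 0 by rewrite lt_eqF.
rewrite mulr1n -(mulVf trQ_neq0) -mulrBr mulr_le0 //.
- by rewrite invr_le0 ltW.
- by rewrite subr_le0.
Qed.

Lemma generator_stochastic_row_sum i : \sum_(j < d) (1%:M - (\tr Q)^-1 *: Q) i j = 1.
Proof.
under eq_bigr do rewrite !mxE.
rewrite sumrB -mulr_sumr Q_row_sum mulr0 subr0 (bigD1 i) //= eqxx big1 ?addr0 //.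
by move=> j /negbTE ji; rewrite eq_sym ji.
Qed.

End GeneratorMatrix.

Lemma Re_conjc (R : rcfType) (z : R[i]) : complex.Re z^*%C = complex.Re z.
Proof. by case: z. Qed.

Lemma Re_sum_mul_conjc (R : rcfType) (I : Type) (r : seq I) (z : I -> R[i]) :
  complex.Re (\sum_(i <- r) z i * (z i)^*%C) = \sum_(i <- r) cabs2 (z i).
Proof.
rewrite raddf_sum; apply: eq_bigr => i _.
by case: (z i) => a b; rewrite /cabs2 /= mulrN opprK !expr2.
Qed.

Section RateMatrix.
Variables (R : realType) (d m : nat) (M : 'I_m -> R -> 'M[R[i]]_d).
Variables (U : 'M[R[i]]_d) (c : 'I_m -> 'I_d -> R[i]).

Lemma Rmat_offdiag_ge0 n1 n2 : n1 != n2 -> 0 <= Rmat M U c n1 n2.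
Proof.
move=> /negbTE n12; rewrite mxE sumr_ge0 // => mu _.
by rewrite n12 mulr0 mul0r addr0 mulr_ge0 // addr_ge0 // sqr_ge0.
Qed.

Variable C : 'M[R[i]]_d.
Hypotheses (M_sum : forall u, \sum_(mu < m) cdag (M mu u) *m M mu u = C)
  (M_C2 : forall mu, C2_mx (M mu)) (U_unitary : cdag U *m U = 1%:M)
  (M0_diag : forall mu, M mu 0 = \sum_(n < d) c mu n *: (col n U *m cdag (col n U))).

Lemma Rmat_row_sum n1 : \sum_(n2 < d) Rmat M U c n1 n2 = 0.
Proof.
pose A mu u := cdag (M mu u).
have A2 mu j k : twice_cderivable (fun v => A mu v j k).
  rewrite /A (_ : (fun v => _) = fun v => (M mu v k j)^*%C).
    exact/twice_cderivableJ/C2_complex_twice_cderivable/M_C2.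
  by apply/funext => v; rewrite cdagE.
have AAC v : \sum_(mu < m) A mu v *m cdag (A mu v) = C.
  by rewrite -(M_sum v); apply: eq_bigr => mu _; rewrite cdagK.
have := congr1 (fun X => complex.Re (braket U X n1 n1)) (deriv2_sum_mul_cdag_eq0 0 A2 AAC).
rewrite /= braket0 braket_sum raddf_sum raddf0 => Re_sum_eq0.
rewrite /Rmat -[RHS]Re_sum_eq0; under eq_bigr do rewrite mxE.
rewrite exchange_big; apply: eq_bigr => mu _ /=.
rewrite /A !braketD braketZ cdagK -cdagM braket_cdag.
rewrite M0_diag braket_mul_diag // braket_mul_cdag //.
rewrite mulr_natl mulr2n !raddfD /= Re_conjc Re_sum_mul_conjc.
rewrite big_split /= -mulr_sumr [X in _ + X = _](bigD1 n1) //= eqxx mulr1.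
rewrite [X in _ + (_ + X) = _]big1 ?addr0 => [|n2 n12]; first lra.
by rewrite eq_sym (negbTE n12) mulr0 mul0r.
Qed.

End RateMatrix.

Theorem lemma1 (R : realType) (d m : nat) (M : 'I_m -> R -> 'M[R[i]]_d)
  (U : 'M[R[i]]_d) (c : 'I_m -> 'I_d -> R[i]) :
  (0 < d)%N -> (0 < m)%N ->
  (forall u : R, \sum_(mu < m) cdag (M mu u) *m M mu u = 1%:M) ->
  (forall mu, C2_mx (M mu)) ->
  cdag U *m U = 1%:M ->
  (forall mu, M mu 0 = \sum_(n < d) c mu n *: (col n U *m cdag (col n U))) ->
  let Rm := Rmat M U c in
  Rm != 0 ->
  let P := 1%:M - (\tr Rm)^-1 *: Rm in
  \tr Rm != 0 /\
  (forall i j, 0 <= P i j) /\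
  (forall i, \sum_(j < d) P i j = 1).
Proof.
move=> _ _ M_sum M_C2 U_unitary M0_diag Rm Rm_neq0 P.
have offdiag_ge0 := Rmat_offdiag_ge0 M U c.
have row_sum := Rmat_row_sum M_sum M_C2 U_unitary M0_diag.
split; first by rewrite lt_eqF // generator_trace_lt0.
split => [i j|i]; first exact: generator_stochastic_ge0.
exact: generator_stochastic_row_sum.
Qed.
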